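(* Let $\mathcal G=(\mathcal V,\mathcal E,W)$ be a network, $h\in\mathbb{R}^{\mathcal V}$, and consider the SNC game with binary actions on $\mathcal G$ with external field $h$, with set of Nash equilibria $\mathcal N$. Let $\mathcal V=\mathcal R\cup\mathcal S$, $\mathcal R\cap\mathcal S=\emptyset$, be a binary partition such that $\mathcal G_{\mathcal R}$ and $\mathcal G_{\mathcal S}$ are both structurally balanced, and let $\tau\in\{\pm1\}^{\mathcal R}$ be such that $\mathcal G_{\mathcal R}^{[\tau]}$ is unsigned. Let $h^-,h^+\in\mathbb{R}^{\mathcal R}$ be given by $h_i^+=\tau_ih_i+w_i^{\mathcal S}$ and $h_i^-=\tau_ih_i-w_i^{\mathcal S}$ for $i\in\mathcal R$. If $\mathcal G_{\mathcal R}$ is $(h^-,h^+)$-indecomposable and $w_i^{\mathcal R}-|h_i|>w_i^{\mathcal S}$ for all $i\in\mathcal R$, then the set $\{x^*\in\mathcal N:\ x^*_{\mathcal R}\in\{\tau,-\tau\}\}$ is globally BR-reachable.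
   Context: A network is a triple $\mathcal G=(\mathcal V,\mathcal E,W)$ where $\mathcal V$ is a finite nonempty set, $\mathcal E\subseteq\mathcal V\times\mathcal V$, and $W\in\mathbb{R}^{\mathcal V\times\mathcal V}$ has zero diagonal and satisfies $W_{ij}\neq0$ iff $(i,j)\in\mathcal E$ (weights may have either sign). It is unsigned if $W\ge0$ entrywise. For $\mathcal U\subseteq\mathcal V$, the subnetwork $\mathcal G_{\mathcal U}$ has node set $\mathcal U$, links $\mathcal E\cap(\mathcal U\times\mathcal U)$ and weight matrix $W_{\mathcal U\mathcal U}$. A network is structurally balanced if its node set can be written as a disjoint union of two sets with nonnegative weights on links within each set and nonpositive weights on links between the two sets. For $\tau\in\{\pm1\}^{\mathcal R}$, $\mathcal G_{\mathcal R}^{[\tau]}$ is the network with the same nodes and links as $\mathcal G_{\mathcal R}$ and weight matrix $[\tau]W_{\mathcal R\mathcal R}[\tau]$, where $[\tau]$ is the diagonal matrix with diagonal $\tau$. For $i\in\mathcal V$ and $\mathcal B\subseteq\mathcal V$, $w_i^{\mathcal B}=\sum_{j\in\mathcal B}|W_{ij}|$. Indecomposability: a network with node set $\mathcal U$ and $h^-\le h^+$ in $\mathbb{R}^{\mathcal U}$ is $(h^-,h^+)$-indecomposable if for every partition $\mathcal U=\mathcal U^-\cup\mathcal U^+$ into two disjoint nonempty sets there is a node $i$ with either $i\in\mathcal U^+$ and $w_i^{\mathcal U^+}+h_i^+<w_i^{\mathcal U^-}$, or $i\in\mathcal U^-$ and $w_i^{\mathcal U^-}-h_i^-<w_i^{\mathcal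 U^+}$. The SNC game with binary actions on $\mathcal G$ with external field $h\in\mathbb{R}^{\mathcal V}$ has player set $\mathcal V$, action set $\{-1,+1\}$ for each player, strategy profiles $\mathcal X=\{\pm1\}^{\mathcal V}$, and utilities $u_i(x)=h_ix_i+x_i\sum_{j\in\mathcal V}W_{ij}x_j$. Best responses $\mathcal B_i(x_{-i})=\arg\max_{x_i\in\{\pm1\}}u_i(x_i,x_{-i})$; Nash equilibrium: $x^*_i\in\mathcal B_i(x^*_{-i})$ for all $i$. A BR-path of length $l\ge0$ from $x$ to $y$ is a sequence $x^{(0)}=x,\dots,x^{(l)}=y$ such that for each $k$ some player $i_k$ has $x^{(k)}_{-i_k}=x^{(k-1)}_{-i_k}$ and $x^{(k)}_{i_k}\in\mathcal B_{i_k}(x^{(k-1)}_{-i_k})\setminus\{x^{(k-1)}_{i_k}\}$. A set $\mathcal X^*\subseteq\mathcal X$ is globally BR-reachable if from every profile there is a BR-path to some element of $\mathcal X^*$. *)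

From HB Require Import structures.
From mathcomp Require Import all_boot all_order all_algebra.
Set Implicit Arguments. Unset Strict Implicit. Unset Printing Implicit Defensive.
Import Order.TTheory GRing.Theory Num.Theory.
Local Open Scope ring_scope.

Section SNC.
Variables (F : realFieldType) (V : finType).

(* A network is given by its weight matrix W : V -> V -> F with zero diagonal;
   the link set is {(i,j) | W i j != 0}. *)
Definition zero_diag (W : V -> V -> F) : Prop := forall i, W i i = 0.

Definition sgn (b : bool) : F := if b then 1 else -1.

Definition wsum (W : V -> V -> F) (i : V) (B : {set V}) : F :=
  \sum_(j in B) `|W i j|.

Definition struct_balanced (W : V -> V -> F) (U : {set V}) : Prop :=
  exists A B : {set V},
    [/\ A :&: B = set0, A :|: B = U,
        (forall i j, ((i \in A) && (j \in A)) || ((i \in B) && (j \in B)) -> 0 <= W i j)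
      & (forall i j, ((i \in A) && (j \in B)) || ((i \in B) && (j \in A)) -> W i j <= 0)].

Definition gauge_unsigned (W : V -> V -> F) (U : {set V}) (tau : V -> bool) : Prop :=
  forall i j, i \in U -> j \in U -> 0 <= sgn (tau i) * W i j * sgn (tau j).

Definition indecomposable (W : V -> V -> F) (U : {set V}) (hm hp : V -> F) : Prop :=
  forall Um Up : {set V},
    Um :&: Up = set0 -> Um :|: Up = U -> Um != set0 -> Up != set0 ->
    exists i, (i \in Up /\ wsum W i Up + hp i < wsum W i Um)
           \/ (i \in Um /\ wsum W i Um - hm i < wsum W i Up).

Definition profile := V -> bool.

Definition upd (x : profile) (i : V) (b : bool) : profile :=
  fun j => if j == i then b else x j.

Definition utility (W : V -> V -> F) (h : V -> F) (i : V) (x : profile) : F :=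
  h i * sgn (x i) + sgn (x i) * \sum_j W i j * sgn (x j).

Definition best_response (W : V -> V -> F) (h : V -> F) (i : V) (x : profile) (b : bool) : Prop :=
  forall c : bool, utility W h i (upd x i c) <= utility W h i (upd x i b).

Definition nash (W : V -> V -> F) (h : V -> F) (x : profile) : Prop :=
  forall i, best_response W h i x (x i).

Definition br_step (W : V -> V -> F) (h : V -> F) (x y : profile) : Prop :=
  exists i, [/\ forall j, j != i -> y j = x j,
                y i != x i & best_response W h i x (y i)].

Inductive br_path (W : V -> V -> F) (h : V -> F) : profile -> profile -> Prop :=
| br_path_nil x : br_path W h x x
| br_path_cons x y z : br_step W h x y -> br_path W h y z -> br_path W h x z.

Definition globally_br_reachable (W : V -> V -> F) (h : V -> F) (P : profile -> Prop) : Prop :=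
  forall x, exists y, P y /\ br_path W h x y.

End SNC.

(** Two sweeps of best responses.  In the first only nodes of R move.  As
   G_R^[tau] is unsigned, tau_i times the field acting on i in R equals
   tau_i h_i + w_i^A - w_i^D up to an error of at most w_i^S, where A and D
   are the nodes of R agreeing and disagreeing with tau.  So while some i in D
   has w_i^D - h_i^- < w_i^A it may switch to tau_i, shrinking D.  Afterwards,
   as long as A and D are both nonempty, indecomposability yields i in A with
   w_i^A + h_i^+ < w_i^D, which may switch away, shrinking A and keeping the
   first condition false since h^- <= h^+.  This ends in consensus tau or -tau
   on R, which is a best response of every node of R whatever S plays, as
   w_i^R - |h_i| > w_i^S.  In the second sweep only nodes of S move.  For a
   gauge sigma making G_S unsigned, the field on i in S towards sigma_i is
   monotone in the set of nodes agreeing with sigma; so letting first the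
   agreeing nodes with negative field switch away, then the disagreeing nodes
   with nonnegative field switch to sigma, reaches a Nash equilibrium. *)
From mathcomp Require Import all_boot all_order all_algebra.
From mathcomp Require Import lra.
Set Implicit Arguments. Unset Strict Implicit. Unset Printing Implicit Defensive.
Import Order.TTheory GRing.Theory Num.Theory.
Local Open Scope ring_scope.

Section SNCGame.
Variables (F : realFieldType) (V : finType) (W : V -> V -> F) (h : V -> F).
Local Notation sgn := (sgn F).
Local Notation profile := (profile V).

Lemma sgn_negb b : sgn (~~ b) = - sgn b.
Proof. by case: b; rewrite /sgn ?opprK. Qed.

Lemma normr_sgn b : `|sgn b| = 1.
Proof. by case: b; rewrite /sgn ?normrN normr1. Qed.

Definition local_field (x : profile) (i : V) : F := h i + \sum_j W i j * sgn (x j).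

Definition agree (U : {set V}) (s x : profile) : {set V} := [set j in U | x j == s j].
Definition disagree (U : {set V}) (s x : profile) : {set V} := [set j in U | x j != s j].

Definition consensus (U : {set V}) (s x : profile) : Prop :=
  (forall i, i \in U -> x i = s i) \/ (forall i, i \in U -> x i = ~~ s i).

Lemma br_path_cat x y z : br_path W h x y -> br_path W h y z -> br_path W h x z.
Proof. by elim=> // a b c ab _ IH /IH; apply: br_path_cons. Qed.

Lemma br_path_descent (P Q : profile -> Prop) (m : profile -> nat) :
    (forall x, P x -> Q x \/ exists y, [/\ br_step W h x y, P y & (m y < m x)%N]) ->
  forall x, P x -> exists y, [/\ br_path W h x y, P y & Q y].
Proof.
move=> step; suff ind n x : (m x < n)%N -> P x -> exists y, [/\ br_path W h x y, P y & Q y].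
  by move=> x; apply: ind (ltnSn _).
elim: n x => [//|n IH] x lt_xn Px.
have [Qx|[y [xy Py lt_yx]]] := step x Px; first by exists x; split=> //; apply: br_path_nil.
have [z [yz Pz Qz]] := IH y (leq_trans lt_yx lt_xn) Py.
by exists z; split=> //; apply: br_path_cons xy yz.
Qed.

Lemma upd_in_setC (U : {set V}) (x : profile) i b : i \in U -> {in ~: U, upd x i b =1 x}.
Proof. by move=> iU j; rewrite inE /upd; case: eqP => // -> /negP. Qed.

Lemma disagreeE U s x : disagree U s x = U :\: agree U s x.
Proof. by apply/setP => j; rewrite !inE; case: (j \in U); case: (x j == s j). Qed.

Lemma setI_disagree_agree U s x : disagree U s x :&: agree U s x = set0.
Proof. by apply/setP => j; rewrite !inE; case: (j \in U); case: (x j == s j). Qed.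

Lemma setU_disagree_agree U s x : disagree U s x :|: agree U s x = U.
Proof. by apply/setP => j; rewrite !inE; case: (j \in U); case: (x j == s j). Qed.

Lemma agree_upd_negb U s x i : agree U s (upd x i (~~ s i)) = agree U s x :\ i.
Proof.
apply/setP => j; rewrite !inE /upd.
by case: (eqVneq j i) => [->|//]; case: (s i); rewrite andbF.
Qed.

Lemma disagree_upd_negb (U : {set V}) (s x : profile) i :
  i \in U -> disagree U s (upd x i (~~ s i)) = i |: disagree U s x.
Proof.
move=> iU; apply/setP => j; rewrite !inE /upd.
by case: (eqVneq j i) => [->|//]; rewrite iU; case: (s i).
Qed.

Lemma agree_upd_same (U : {set V}) (s x : profile) i :
  i \in U -> agree U s (upd x i (s i)) = i |: agree U s x.
Proof.
move=> iU; apply/setP => j; rewrite !inE /upd.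
by case: (eqVneq j i) => [->|//]; rewrite !eqxx iU.
Qed.

Lemma disagree_upd_same U s x i : disagree U s (upd x i (s i)) = disagree U s x :\ i.
Proof.
apply/setP => j; rewrite !inE /upd.
by case: (eqVneq j i) => [->|//]; rewrite eqxx andbF.
Qed.

Lemma wsum_ge0 i (B : {set V}) : 0 <= wsum W i B.
Proof. exact: sumr_ge0. Qed.

Lemma wsumS i (A B : {set V}) : A \subset B -> wsum W i A <= wsum W i B.
Proof.
move=> AB; rewrite /wsum [leRHS](big_setID A) /= (setIidPr AB) lerDl.
exact: sumr_ge0.
Qed.

Lemma norm_sum_le_wsum i (B : {set V}) (x : profile) :
  `|\sum_(j in B) W i j * sgn (x j)| <= wsum W i B.
Proof.
apply: le_trans (ler_norm_sum _ _ _) _.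
by apply: ler_sum => j _; rewrite normrM normr_sgn mulr1.
Qed.

Lemma gauge_unsigned_negb U s : gauge_unsigned W U s -> gauge_unsigned W U (fun j => ~~ s j).
Proof. by move=> g i j iU jU; rewrite !sgn_negb mulrN !mulNr opprK; apply: g. Qed.

Lemma gauge_term (U : {set V}) s i j b : gauge_unsigned W U s -> i \in U -> j \in U ->
  sgn (s i) * (W i j * sgn b) = if b == s j then `|W i j| else - `|W i j|.
Proof.
move=> g iU jU; have nW : `|W i j| = sgn (s i) * W i j * sgn (s j).
  by rewrite -(ger0_norm (g i j iU jU)) !normrM !normr_sgn mul1r mulr1.
case: eqP => [->|/eqP bs]; first by rewrite nW mulrA.
have -> : b = ~~ s j by move: bs; case: b; case: (s j).
by rewrite nW sgn_negb !mulrN mulrA.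
Qed.

Lemma local_field_gauge (U : {set V}) s x i : gauge_unsigned W U s -> i \in U ->
  sgn (s i) * local_field x i =
    sgn (s i) * h i + (wsum W i (agree U s x) - wsum W i (disagree U s x))
    + sgn (s i) * \sum_(j in ~: U) W i j * sgn (x j).
Proof.
move=> g iU; rewrite /local_field (bigID (mem U)) /= !mulrDr addrA; congr (_ + _ + _).
  rewrite mulr_sumr (bigID (fun j => x j == s j)) /= /wsum -sumrN.
  congr (_ + _); apply: eq_big => [j|j /andP[jU]]; rewrite ?inE // (gauge_term _ g) //.
    by move=> ->.
  by move=> /negPf ->.
by congr (_ * _); apply: eq_bigl => j; rewrite inE.
Qed.

Lemma local_field_gauge_bounds (U : {set V}) s x i : gauge_unsigned W U s -> i \in U ->
  sgn (s i) * h i - wsum W i (~: U) + (wsum W i (agree U s x) - wsum W i (disagree U s x))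
  <= sgn (s i) * local_field x i <=
  sgn (s i) * h i + wsum W i (~: U) + (wsum W i (agree U s x) - wsum W i (disagree U s x)).
Proof.
move=> g iU; rewrite (local_field_gauge _ g iU).
have : `|sgn (s i) * \sum_(j in ~: U) W i j * sgn (x j)| <= wsum W i (~: U).
  by rewrite normrM normr_sgn mul1r norm_sum_le_wsum.
by rewrite ler_norml => /andP[le1 le2]; apply/andP; split; lra.
Qed.

Lemma struct_balanced_gauge U : struct_balanced W U -> exists s, gauge_unsigned W U s.
Proof.
case=> [A [B [_ ABU pos neg]]]; exists (fun j => j \in A) => i j iU jU.
have inB k : k \in U -> k \notin A -> k \in B.
  by move=> kU kA; move: kU; rewrite -ABU inE (negPf kA).
rewrite /sgn; case: (boolP (i \in A)) => iA; case: (boolP (j \in A)) => jA.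
- by rewrite mul1r mulr1; apply: pos; rewrite iA jA.
- by rewrite mul1r mulrN1 oppr_ge0; apply: neg; rewrite iA inB.
- by rewrite mulN1r mulr1 oppr_ge0; apply: neg; rewrite jA (inB i) ?orbT.
- by rewrite mulN1r mulrN1 opprK; apply: pos; rewrite !inB ?orbT.
Qed.

Section ZeroDiagonal.
Hypothesis W0 : zero_diag W.

Lemma best_responseP i x b : best_response W h i x b <-> 0 <= sgn b * local_field x i.
Proof.
have uE c : utility W h i (upd x i c) = sgn c * local_field x i.
  rewrite /utility /upd eqxx /local_field mulrDr mulrC; congr (_ + _ * _).
  rewrite (bigD1 i) //= [RHS](bigD1 i) //= W0 !mul0r !add0r.
  by apply: eq_bigr => j /negPf ->.
rewrite /best_response; split=> [br | ge0 c].
  by have := br (~~ b); rewrite !uE sgn_negb mulNr; lra.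
rewrite !uE; case: (eqVneq c b) => [-> //|ncb].
have -> : c = ~~ b by move: ncb; case: c; case: (b).
by rewrite sgn_negb mulNr; lra.
Qed.

Lemma br_step_upd x i b :
  b != x i -> 0 <= sgn b * local_field x i -> br_step W h x (upd x i b).
Proof.
move=> bx ge0; exists i; split; first by move=> j /negPf; rewrite /upd => ->.
  by rewrite /upd eqxx.
by apply/best_responseP; rewrite /upd eqxx.
Qed.

Lemma agreeing_best_response (U : {set V}) s x i : gauge_unsigned W U s ->
    (forall j, j \in U -> x j = s j) -> i \in U -> wsum W i (~: U) < wsum W i U - `|h i| ->
  best_response W h i x (x i).
Proof.
move=> g xs iU dom; apply/best_responseP; rewrite xs //.
have AU : agree U s x = U.
  by apply/setP => j; rewrite inE; case jU: (j \in U); rewrite //= xs ?eqxx.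
have := local_field_gauge_bounds x g iU; rewrite disagreeE AU setDv /wsum big_set0.
have := ler_norm (- (sgn (s i) * h i)); rewrite normrN normrM normr_sgn mul1r.
by rewrite /wsum in dom => hi /andP[lb _]; lra.
Qed.

Section Balanced.
Variables (U : {set V}) (s : profile).
Hypothesis gU : gauge_unsigned W U s.

Lemma local_field_agree_mono x y i : i \in U -> {in ~: U, y =1 x} ->
  agree U s x \subset agree U s y -> sgn (s i) * local_field x i <= sgn (s i) * local_field y i.
Proof.
move=> iU yx sxy; rewrite !(local_field_gauge _ gU iU).
have -> : \sum_(j in ~: U) W i j * sgn (y j) = \sum_(j in ~: U) W i j * sgn (x j).
  by apply: eq_bigr => j /yx ->.
by rewrite lerD2r lerD2l lerB ?wsumS // !disagreeE setDS.
Qed.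

Definition agree_stable x := forall j, j \in agree U s x -> 0 <= sgn (s j) * local_field x j.

Lemma br_path_agree_stable x :
  exists y, [/\ br_path W h x y, {in ~: U, y =1 x} & agree_stable y].
Proof.
apply: (br_path_descent (P := fun y => {in ~: U, y =1 x}) (m := fun y => #|agree U s y|)) => //.
move=> y yx.
case: (boolP [exists i in agree U s y, sgn (s i) * local_field y i < 0]); last first.
  by move/exists_inPn => none; left => j /none; rewrite -leNgt.
case/exists_inP => i iA lt0; have /setIdP[iU /eqP yi] := iA.
right; exists (upd y i (~~ s i)); split.
- by apply: br_step_upd; rewrite ?yi ?sgn_negb ?mulNr ?oppr_ge0 ?ltW //; case: (s i).
- by move=> j jU; rewrite (upd_in_setC _ _ iU) ?yx.
- by rewrite agree_upd_negb (cardsD1 i (agree U s y)) iA.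
Qed.

Lemma br_path_best_responses_in x : exists y,
  [/\ br_path W h x y, {in ~: U, y =1 x} & forall i, i \in U -> best_response W h i y (y i)].
Proof.
have [x1 [xx1 x1x st1]] := br_path_agree_stable x.
have [|y [x1y [yx _] bry]] := br_path_descent
    (P := fun y => {in ~: U, y =1 x} /\ agree_stable y)
    (Q := fun y => forall i, i \in U -> best_response W h i y (y i))
    (m := fun y => #|disagree U s y|) _ (conj x1x st1); last first.
  by exists y; split=> //; apply: br_path_cat xx1 x1y.
move=> z [zx stz].
case: (boolP [exists i in disagree U s z, 0 <= sgn (s i) * local_field z i]); last first.
  move/exists_inPn => none; left => i iU; apply/best_responseP.
  have [zi|zi] := eqVneq (z i) (s i); first by rewrite zi stz // inE iU zi eqxx.
  have := none i; rewrite inE iU zi -ltNge => /(_ isT) lt0.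
  have -> : z i = ~~ s i by move: zi; case: (z i); case: (s i).
  by rewrite sgn_negb mulNr oppr_ge0 ltW.
case/exists_inP => i iD ge0; have /setIdP[iU zi] := iD.
have z'z : {in ~: U, upd z i (s i) =1 z} by apply: upd_in_setC.
have sub : agree U s z \subset agree U s (upd z i (s i)).
  by rewrite agree_upd_same // subsetUr.
right; exists (upd z i (s i)); split.
- by apply: br_step_upd; rewrite // eq_sym.
- split=> [j jU | j jA]; first by rewrite z'z ?zx.
  have jU : j \in U by case/setIdP: jA.
  apply: le_trans (local_field_agree_mono jU z'z sub).
  move: jA; rewrite agree_upd_same // => /setU1P[-> //|]; exact: stz.
- by rewrite disagree_upd_same (cardsD1 i (disagree U s z)) iD.
Qed.

End Balanced.

Section Indecomposable.
Variables (R : {set V}) (tau : profile).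
Hypothesis gR : gauge_unsigned W R tau.

Definition hm i := sgn (tau i) * h i - wsum W i (~: R).
Definition hp i := sgn (tau i) * h i + wsum W i (~: R).

Hypothesis indec : indecomposable W R hm hp.
Hypothesis dominant : forall i, i \in R -> wsum W i R - `|h i| > wsum W i (~: R).

Definition disagree_stable x := forall j, j \in disagree R tau x ->
  wsum W j (agree R tau x) <= wsum W j (disagree R tau x) - hm j.

Lemma br_path_disagree_stable x : exists y, br_path W h x y /\ disagree_stable y.
Proof.
have [|y [xy _ sty]] := br_path_descent (P := fun _ => True) (Q := disagree_stable)
    (m := fun y => #|disagree R tau y|) _ (x := x) I; last by exists y.
move=> z _.
case: (boolP [exists i in disagree R tau z,
                wsum W i (disagree R tau z) - hm i < wsum W i (agree R tau z)]); last first.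
  by move/exists_inPn => none; left => j /none; rewrite -leNgt.
case/exists_inP => i iD lt; have /setIdP[iR zi] := iD.
right; exists (upd z i (tau i)); split=> //.
- apply: br_step_upd; first by rewrite eq_sym.
  by case/andP: (local_field_gauge_bounds z gR iR); rewrite /hm in lt; lra.
- by rewrite disagree_upd_same (cardsD1 i (disagree R tau z)) iD.
Qed.

Lemma br_path_consensus x : exists y, br_path W h x y /\ consensus R tau y.
Proof.
have [x1 [xx1 st1]] := br_path_disagree_stable x.
have [|y [x1y _ cy]] := br_path_descent (P := disagree_stable) (Q := consensus R tau)
    (m := fun y => #|agree R tau y|) _ st1; last first.
  by exists y; split=> //; apply: br_path_cat xx1 x1y.
move=> z stz.
have [D0|Dn] := eqVneq (disagree R tau z) set0.
  left; left => i iR; have : i \notin disagree R tau z by rewrite D0 inE.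
  by rewrite inE iR negbK => /eqP.
have [A0|An] := eqVneq (agree R tau z) set0.
  left; right => i iR; have : i \notin agree R tau z by rewrite A0 inE.
  by rewrite inE iR /=; case: (z i); case: (tau i).
right; have [i [[iA lt]|[iD lt]]] :=
  indec (setI_disagree_agree R tau z) (setU_disagree_agree R tau z) Dn An; last first.
  by have := stz i iD; lra.
have /setIdP[iR /eqP zi] := iA.
exists (upd z i (~~ tau i)); split.
- apply: br_step_upd; first by rewrite zi; case: (tau i).
  rewrite sgn_negb mulNr oppr_ge0.
  by case/andP: (local_field_gauge_bounds z gR iR); rewrite /hp in lt; lra.
- move=> j; rewrite disagree_upd_negb // agree_upd_negb => jD.
  have leA := wsumS j (subD1set (agree R tau z) i).
  have leD := wsumS j (subsetUr [set i] (disagree R tau z)).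
  case/setU1P: jD => [ji|jD]; last by have := stz j jD; lra.
  by rewrite ji in leA leD *; have := wsum_ge0 i (~: R); rewrite /hm /hp in lt *; lra.
- by rewrite agree_upd_negb (cardsD1 i (agree R tau z)) iA.
Qed.

Lemma consensus_best_response x i :
  consensus R tau x -> i \in R -> best_response W h i x (x i).
Proof.
move=> [] xR iR; first exact: agreeing_best_response gR xR iR (dominant iR).
exact: agreeing_best_response (gauge_unsigned_negb gR) xR iR (dominant iR).
Qed.

End Indecomposable.

End ZeroDiagonal.
End SNCGame.

Theorem corollary3 (F : realFieldType) (V : finType)
  (W : V -> V -> F) (h : V -> F) (R S : {set V}) (tau : V -> bool) :
  zero_diag W ->
  R :&: S = set0 -> R :|: S = [set: V] -> R != set0 -> S != set0 ->
  struct_balanced W R -> struct_balanced W S ->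
  gauge_unsigned W R tau ->
  indecomposable W R
    (fun i => sgn F (tau i) * h i - wsum W i S)
    (fun i => sgn F (tau i) * h i + wsum W i S) ->
  (forall i, i \in R -> wsum W i R - `|h i| > wsum W i S) ->
  globally_br_reachable W h
    (fun x => nash W h x /\
       ((forall i, i \in R -> x i = tau i) \/ (forall i, i \in R -> x i = ~~ tau i))).
Proof.
(* Balance of G_R is already implied by the gauge tau; R and S need not be nonempty. *)
move=> W0 RS0 RSU _ _ _ balS gR indec dominant x.
have S_def : S = ~: R.
  apply/setP => j; rewrite inE; move/setP/(_ j): RS0; move/setP/(_ j): RSU.
  by rewrite !inE; case: (j \in R); case: (j \in S).
subst S; have [sigma gS] := struct_balanced_gauge balS.
have [y [xy cy]] := br_path_consensus W0 gR indec x.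
have [z [yz zy brz]] := br_path_best_responses_in h W0 gS y.
have cz : consensus R tau z.
  by case: cy => yR; [left | right] => i iR; rewrite zy ?setCK // yR.
exists z; split; last exact: br_path_cat xy yz.
split=> // i; have [iR|iR] := boolP (i \in R).
  exact: (consensus_best_response W0 gR dominant cz iR).
by apply: brz; rewrite inE.
Qed.
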